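(* Let $(X,d)$ be a complete CAT(0) space and let $A,B\subseteq X$ be nonempty, closed and convex. Define $P:A\cup B\to A\cup B$ by $P(x)=P_B(x)$ if $x\in A$ and $P(x)=P_A(x)$ if $x\in B$. Then $P$ is a cyclic relatively nonexpansive mapping.
   Context: A CAT(0) space is a geodesic space in which every geodesic triangle satisfies $d(x,y)\le d_{\mathbb{E}^2}(\bar x,\bar y)$ for all points $x,y$ of the triangle and their comparison points $\bar x,\bar y$ in a Euclidean comparison triangle with the same side lengths. For nonempty closed convex $C$ in a complete CAT(0) space, $P_C(x)$ denotes the unique point of $C$ nearest to $x$ (metric projection). A mapping $T:A\cup B\to A\cup B$ is relatively nonexpansive if $d(Tx,Ty)\le d(x,y)$ for all $x\in A$, $y\in B$, and cyclic if $T(A)\subseteq B$ and $T(B)\subseteq A$. *)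

From Stdlib Require Import Reals List ClassicalEpsilon.
Import ListNotations.
Open Scope R_scope.

Section CAT0.
Variable X : Type.
Variable d : X -> X -> R.

Definition is_metric : Prop :=
  (forall x y, 0 <= d x y) /\
  (forall x y, d x y = 0 <-> x = y) /\
  (forall x y, d x y = d y x) /\
  (forall x y z, d x z <= d x y + d y z).

(* g : [0, d x y] -> X is a geodesic from x to y (values outside are irrelevant) *)
Definition geodesic (g : R -> X) (x y : X) : Prop :=
  g 0 = x /\ g (d x y) = y /\
  forall s t, 0 <= s <= d x y -> 0 <= t <= d x y -> d (g s) (g t) = Rabs (s - t).

Definition geodesic_space : Prop :=
  forall x y, exists g, geodesic g x y.

Definition euclid (p q : R * R) : R :=
  sqrt ((fst p - fst q) ^ 2 + (snd p - snd q) ^ 2).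

Definition lerp (u v : R * R) (r : R) : R * R :=
  (fst u + r * (fst v - fst u), snd u + r * (snd v - snd u)).

(* a side of a triangle: geodesic g of length a, with comparison endpoints ub vb *)
Definition side : Type := ((R -> X) * R * (R * R) * (R * R))%type.

(* CAT(0) inequality between points of two sides of a geodesic triangle
   and their comparison points *)
Definition side_pair_ok (S1 S2 : side) : Prop :=
  let '(g, a, u, v) := S1 in
  let '(h, b, w, z) := S2 in
  forall s t, 0 <= s <= a -> 0 <= t <= b ->
    d (g s) (h t) <= euclid (lerp u v (s / a)) (lerp w z (t / b)).

Definition CAT0_ineq : Prop :=
  forall (x y z : X) (g1 g2 g3 : R -> X),
    geodesic g1 x y -> geodesic g2 y z -> geodesic g3 z x ->
    forall xb yb zb : R * R,
      euclid xb yb = d x y -> euclid yb zb = d y z -> euclid zb xb = d z x ->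
      let Ss := [(g1, d x y, xb, yb); (g2, d y z, yb, zb); (g3, d z x, zb, xb)] in
      forall S1 S2, In S1 Ss -> In S2 Ss -> side_pair_ok S1 S2.

Definition complete : Prop :=
  forall u : nat -> X,
    (forall eps, 0 < eps -> exists N, forall m n, (N <= m)%nat -> (N <= n)%nat ->
        d (u m) (u n) < eps) ->
    exists l, forall eps, 0 < eps -> exists N, forall n, (N <= n)%nat -> d (u n) l < eps.

Definition complete_CAT0 : Prop :=
  is_metric /\ geodesic_space /\ CAT0_ineq /\ complete.

Definition nonempty (C : X -> Prop) : Prop := exists x, C x.

Definition closed (C : X -> Prop) : Prop :=
  forall (u : nat -> X) (l : X), (forall n, C (u n)) ->
    (forall eps, 0 < eps -> exists N, forall n, (N <= n)%nat -> d (u n) l < eps) ->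
    C l.

Definition convex (C : X -> Prop) : Prop :=
  forall x y g, C x -> C y -> geodesic g x y ->
    forall s, 0 <= s <= d x y -> C (g s).

Definition proj (C : X -> Prop) (x : X) : X :=
  epsilon (inhabits x) (fun p => C p /\ forall c, C c -> d x p <= d x c).

(* the map P on A ∪ B (defined arbitrarily, as P_A, outside A ∪ B) *)
Definition cycP (A B : X -> Prop) (x : X) : X :=
  if excluded_middle_informative (A x) then proj B x else proj A x.

Definition cyclic_map (A B : X -> Prop) (T : X -> X) : Prop :=
  (forall x, A x -> B (T x)) /\ (forall x, B x -> A (T x)).

Definition rel_nonexpansive (A B : X -> Prop) (T : X -> X) : Prop :=
  forall x y, A x -> B y -> d (T x) (T y) <= d x y.

End CAT0.

(* In a CAT(0) space the Bruhat–Tits CN inequality holds along geodesics. With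
   completeness it yields nearest points on closed convex sets, and it shows that
   the nearest point p of x in a convex set C satisfies
   d(x,p)^2 + d(p,c)^2 <= d(x,c)^2 for every c in C.  For x in A and y in B, with
   p = P_B(x) and q = P_A(y), this inequality (applied with c = y and c = x) and the
   CN inequality at the midpoint m of [x,y] give d(m,p), d(m,q) <= d(x,y)/2, hence
   d(p,q) <= d(x,y). *)

From Stdlib Require Import Reals Lra Lia Psatz ClassicalEpsilon Classical.
Open Scope R_scope.

Lemma sqr_le_of_le_sqrt (u v : R) : 0 <= u -> 0 <= v -> u <= sqrt v -> u ^ 2 <= v.
Proof.
  intros Hu Hv Huv. rewrite <- (pow2_sqrt v Hv). apply pow_incr. lra.
Qed.

Lemma Rle_of_forall_small_step (u v k : R) : 0 <= k ->
  (forall l, 0 < l <= 1 -> u <= v + l * k) -> u <= v.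
Proof.
  intros Hk Hsmall. apply Rle_plus_epsilon. intros eps Heps.
  set (l := Rmin 1 (eps / (k + 1))).
  assert (Hl0 : 0 < l) by (apply Rmin_glb_lt; [lra | apply Rdiv_lt_0_compat; lra]).
  assert (Hlk : l * k <= eps).
  { assert (Hl : l <= eps / (k + 1)) by apply Rmin_r.
    assert (l * (k + 1) <= eps).
    { apply (Rmult_le_compat_r (k + 1)) in Hl; [|lra].
      now replace (eps / (k + 1) * (k + 1)) with eps in Hl by (field; lra). }
    nra. }
  pose proof (Hsmall l (conj Hl0 (Rmin_l _ _))). lra.
Qed.

Lemma euclid_comparison_triangle (a b c : R) : 0 < c -> 0 <= a -> 0 <= b ->
  a <= b + c -> b <= a + c -> c <= a + b ->
  exists p q, euclid (c, 0) (p, q) = a /\ euclid (p, q) (0, 0) = b /\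
    2 * c * p = c * c + b * b - a * a /\ p * p + q * q = b * b.
Proof.
  intros Hc Ha Hb Hab Hba Hcab.
  set (p := (c * c + b * b - a * a) / (2 * c)).
  assert (Hp : 2 * c * p = c * c + b * b - a * a) by (unfold p; field; lra).
  assert (Hq : 0 <= b * b - p * p).
  { assert (Hprod : 0 <= (2 * b * c - 2 * c * p) * (2 * b * c + 2 * c * p)).
    { rewrite Hp. apply Rmult_le_pos; nra. }
    assert (Hc2 : 0 < 4 * (c * c)) by nra.
    replace ((2 * b * c - 2 * c * p) * (2 * b * c + 2 * c * p))
      with (4 * (c * c) * (b * b - p * p)) in Hprod by ring.
    apply Rmult_le_reg_l with (4 * (c * c)); lra. }
  exists p, (sqrt (b * b - p * p)).
  pose proof (sqrt_sqrt _ Hq) as Hs.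
  set (r := sqrt (b * b - p * p)) in *.
  unfold euclid; cbn [fst snd].
  split; [|split; [|split]]; try lra.
  - rewrite <- (sqrt_square a Ha). f_equal.
    replace ((0 - r) ^ 2) with (r * r) by ring. rewrite Hs. nra.
  - rewrite <- (sqrt_square b Hb). f_equal.
    replace ((r - 0) ^ 2) with (r * r) by ring. rewrite Hs. ring.
Qed.

Lemma le_of_sqr_le (u v : R) : 0 <= v -> u ^ 2 <= v ^ 2 -> u <= v.
Proof. intros Hv Huv. apply Rnot_lt_le. intro Hvu. nra. Qed.

Lemma inv_INR_succ_eventually_lt (eps : R) : 0 < eps ->
  exists N, forall n, (N <= n)%nat -> / (INR n + 1) < eps.
Proof.
  intros Heps. destruct (archimed_cor1 eps Heps) as [N [HN HN0]].
  exists N. intros n Hn.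
  apply (Rle_lt_trans _ (/ INR N)); [|exact HN].
  apply Rinv_le_contravar; [now apply lt_0_INR|].
  apply le_INR in Hn. lra.
Qed.

Section CAT0Geometry.

Variables (X : Type) (d : X -> X -> R).
Hypothesis Hmetric : is_metric X d.
Hypothesis Hgeodesic : geodesic_space X d.
Hypothesis Hcat : CAT0_ineq X d.

Lemma dist_ge0 x y : 0 <= d x y.
Proof. apply Hmetric. Qed.

Lemma dist_sym x y : d x y = d y x.
Proof. apply Hmetric. Qed.

Lemma dist_refl x : d x x = 0.
Proof. now apply Hmetric. Qed.

Lemma dist_eq0 x y : d x y = 0 -> x = y.
Proof. apply Hmetric. Qed.

Lemma dist_triangle x y z : d x z <= d x y + d y z.
Proof. apply Hmetric. Qed.

Lemma CAT0_point_vertex x y z g xb yb zb : geodesic X d g x y ->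
  euclid xb yb = d x y -> euclid yb zb = d y z -> euclid zb xb = d z x ->
  forall s, 0 <= s <= d x y -> d (g s) z <= euclid (lerp xb yb (s / d x y)) zb.
Proof.
  intros Hg Exy Eyz Ezx s Hs.
  destruct (Hgeodesic y z) as [g2 Hg2], (Hgeodesic z x) as [g3 Hg3].
  pose proof (Hcat x y z g g2 g3 Hg Hg2 Hg3 xb yb zb Exy Eyz Ezx) as Hcmp; cbn zeta in Hcmp.
  specialize (Hcmp (g, d x y, xb, yb) (g3, d z x, zb, xb)
    ltac:(now left) ltac:(now right; right; left) s 0 Hs ltac:(split; [lra | apply dist_ge0])).
  destruct Hg3 as [Hg30 _]. rewrite Hg30, Rdiv_0_l in Hcmp.
  unfold lerp at 2 in Hcmp. destruct zb as [zb1 zb2]; cbn [fst snd] in Hcmp.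
  now replace (zb1 + 0 * (fst xb - zb1), zb2 + 0 * (snd xb - zb2)) with (zb1, zb2)
    in Hcmp by (f_equal; ring).
Qed.

Lemma CN_inequality x y z g : geodesic X d g x y -> 0 < d x y ->
  forall s, 0 <= s <= d x y ->
  d z (g s) ^ 2 <= (1 - s / d x y) * d z x ^ 2 + (s / d x y) * d z y ^ 2
                   - (s / d x y) * (1 - s / d x y) * d x y ^ 2.
Proof.
  intros Hg Hc s Hs.
  set (c := d x y) in *. set (a := d y z). set (b := d z x).
  assert (Htri : a <= b + c /\ b <= a + c /\ c <= a + b).
  { pose proof (dist_triangle y x z). pose proof (dist_triangle z y x).
    pose proof (dist_triangle x z y).
    rewrite (dist_sym y x), (dist_sym z y), (dist_sym x z) in *. unfold a, b, c. lra. }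
  destruct (euclid_comparison_triangle a b c Hc (dist_ge0 _ _) (dist_ge0 _ _)
              ltac:(lra) ltac:(lra) ltac:(lra)) as [p [q [Ea [Eb [Ep Epq]]]]].
  assert (Ec : euclid (0, 0) (c, 0) = c).
  { unfold euclid; cbn [fst snd].
    replace ((0 - c) ^ 2 + (0 - 0) ^ 2) with (c * c) by ring. apply sqrt_square; lra. }
  pose proof (CAT0_point_vertex x y z g (0, 0) (c, 0) (p, q) Hg Ec Ea Eb s Hs) as Hv.
  fold c in Hv. rewrite dist_sym in Hv.
  set (l := s / c) in *.
  unfold euclid, lerp in Hv; cbn [fst snd] in Hv.
  apply sqr_le_of_le_sqrt in Hv; [|apply dist_ge0|apply Rplus_le_le_0_compat; apply pow2_ge_0].
  rewrite (dist_sym z y). fold a b.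
  replace ((0 + l * (c - 0) - p) ^ 2 + (0 + l * (0 - 0) - q) ^ 2)
    with (l * l * c * c - l * (2 * c * p) + (p * p + q * q)) in Hv by ring.
  rewrite Ep, Epq in Hv. apply (Rle_trans _ _ _ Hv). right. ring.
Qed.

Lemma CN_point x y l : 0 <= l <= 1 ->
  exists m, (forall C, convex X d C -> C x -> C y -> C m) /\
    forall z, d z m ^ 2 <= (1 - l) * d z x ^ 2 + l * d z y ^ 2 - l * (1 - l) * d x y ^ 2.
Proof.
  intros Hl.
  destruct (Rle_lt_or_eq_dec 0 (d x y) (dist_ge0 x y)) as [Hxy | Hxy].
  - destruct (Hgeodesic x y) as [g Hg].
    assert (Hs : 0 <= l * d x y <= d x y) by nra.
    exists (g (l * d x y)). split.
    + intros C HC Cx Cy. exact (HC x y g Cx Cy Hg _ Hs).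
    + intro z. pose proof (CN_inequality x y z g Hg Hxy _ Hs) as Hcn.
      now replace (l * d x y / d x y) with l in Hcn by (field; lra).
  - assert (y = x) as -> by (apply dist_eq0; rewrite dist_sym; auto).
    exists x. split; [tauto|]. intro z. rewrite <- Hxy. right. ring.
Qed.

Definition is_nearest (C : X -> Prop) (x p : X) : Prop :=
  C p /\ forall c, C c -> d x p <= d x c.

Lemma is_nearest_refl (C : X -> Prop) x : C x -> is_nearest C x x.
Proof. split; auto. intros c _. rewrite dist_refl. apply dist_ge0. Qed.

Lemma is_nearest_self (C : X -> Prop) x p : C x -> is_nearest C x p -> p = x.
Proof.
  intros Cx [_ Hp]. apply dist_eq0. rewrite dist_sym.
  pose proof (Hp x Cx) as Hpx. rewrite dist_refl in Hpx. pose proof (dist_ge0 x p). lra.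
Qed.

Lemma is_nearest_obtuse (C : X -> Prop) x p c : convex X d C -> is_nearest C x p -> C c ->
  d x p ^ 2 + d p c ^ 2 <= d x c ^ 2.
Proof.
  intros HC [Cp Hp] Cc.
  apply (Rle_of_forall_small_step _ _ (d p c ^ 2)); [apply pow2_ge_0|].
  intros l Hl.
  destruct (CN_point p c l ltac:(lra)) as [m [Hm Hcn]].
  specialize (Hcn x).
  pose proof (Hp m (Hm C HC Cp Cc)) as Hpm.
  assert (Hsq : d x p ^ 2 <= d x m ^ 2) by (apply pow_incr; split; [apply dist_ge0 | auto]).
  assert (Hk : l * (d x p ^ 2 + (1 - l) * d p c ^ 2 - d x c ^ 2) <= 0) by nra.
  assert (d x p ^ 2 + (1 - l) * d p c ^ 2 - d x c ^ 2 <= 0).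
  { apply Rnot_lt_le. intro Hpos.
    pose proof (Rmult_lt_0_compat l _ ltac:(lra) Hpos). lra. }
  nra.
Qed.

Lemma convex_parallelogram_bound (C : X -> Prop) x dl a b : convex X d C -> 0 <= dl ->
  (forall c, C c -> dl <= d x c) -> C a -> C b ->
  d a b ^ 2 <= 2 * d x a ^ 2 + 2 * d x b ^ 2 - 4 * dl ^ 2.
Proof.
  intros HC Hdl Hlow Ca Cb.
  destruct (CN_point a b (/ 2) ltac:(lra)) as [m [Hm Hcn]].
  specialize (Hcn x).
  pose proof (Hlow m (Hm C HC Ca Cb)).
  assert (dl ^ 2 <= d x m ^ 2) by (apply pow_incr; lra).
  lra.
Qed.

Lemma nearest_points_nonexpansive (A B : X -> Prop) x y p q :
  convex X d A -> convex X d B -> A x -> B y ->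
  is_nearest B x p -> is_nearest A y q -> d p q <= d x y.
Proof.
  intros HA HB Ax By Hp Hq.
  pose proof (is_nearest_obtuse B x p y HB Hp By) as Hpy.
  pose proof (is_nearest_obtuse A y q x HA Hq Ax) as Hqx.
  destruct (CN_point x y (/ 2) ltac:(lra)) as [m [_ Hcn]].
  pose proof (Hcn p) as Hmp. pose proof (Hcn q) as Hmq.
  rewrite !(dist_sym p), !(dist_sym q), (dist_sym y x) in *.
  assert (Hp2 : d m p ^ 2 <= (d x y / 2) ^ 2) by lra.
  assert (Hq2 : d m q ^ 2 <= (d x y / 2) ^ 2) by lra.
  pose proof (dist_ge0 x y).
  apply le_of_sqr_le in Hp2, Hq2; try lra.
  pose proof (dist_triangle p m q). rewrite (dist_sym p m) in *. lra.
Qed.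

Lemma dist_inf_approx (C : X -> Prop) x : nonempty X C ->
  exists dl, 0 <= dl /\ (forall c, C c -> dl <= d x c) /\
    forall eps, 0 < eps -> exists c, C c /\ d x c < dl + eps.
Proof.
  intros [c0 Cc0].
  set (E := fun r => exists c, C c /\ r = - d x c).
  assert (HEb : bound E).
  { exists 0. intros r [c [_ ->]]. pose proof (dist_ge0 x c). lra. }
  destruct (completeness E HEb (ex_intro _ _ (ex_intro _ c0 (conj Cc0 eq_refl))))
    as [m [Hub Hlub]].
  exists (- m). split; [|split].
  - enough (m <= 0) by lra. apply Hlub. intros r [c [_ ->]]. pose proof (dist_ge0 x c). lra.
  - intros c Cc. enough (- d x c <= m) by lra. apply Hub. now exists c.
  - intros eps Heps. apply NNPP. intro Hnone.
    enough (m <= m - eps) by lra. apply Hlub. intros r [c [Cc ->]].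
    apply Rnot_lt_le. intro. apply Hnone. exists c. split; [auto | lra].
Qed.

Definition cauchy (u : nat -> X) : Prop :=
  forall eps, 0 < eps -> exists N, forall m n, (N <= m)%nat -> (N <= n)%nat -> d (u m) (u n) < eps.

Lemma minimizing_sequence_cauchy (C : X -> Prop) x dl u : convex X d C -> 0 <= dl ->
  (forall c, C c -> dl <= d x c) ->
  (forall n, C (u n) /\ d x (u n) < dl + / (INR n + 1)) -> cauchy u.
Proof.
  intros HC Hdl Hlow Hu eps Heps.
  set (delta := Rmin 1 (eps ^ 2 / (8 * dl + 4))).
  assert (Hdelta : 0 < delta).
  { apply Rmin_glb_lt; [lra|]. apply Rdiv_lt_0_compat; nra. }
  assert (Hdelta_eps : delta * (8 * dl + 4) <= eps ^ 2).
  { assert (Hd : delta <= eps ^ 2 / (8 * dl + 4)) by apply Rmin_r.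
    apply (Rmult_le_compat_r (8 * dl + 4)) in Hd; [|lra].
    now replace (eps ^ 2 / (8 * dl + 4) * (8 * dl + 4)) with (eps ^ 2) in Hd by (field; lra). }
  destruct (inv_INR_succ_eventually_lt delta Hdelta) as [N HN].
  exists N. intros m n Hm Hn.
  destruct (Hu m) as [Cm Dm], (Hu n) as [Cn Dn].
  pose proof (HN m Hm). pose proof (HN n Hn).
  assert (Hdelta1 : delta <= 1) by apply Rmin_l.
  pose proof (Hlow _ Cm). pose proof (Hlow _ Cn).
  pose proof (convex_parallelogram_bound C x dl _ _ HC Hdl Hlow Cm Cn) as Hmid.
  assert (Hm2 : d x (u m) ^ 2 <= (dl + delta) ^ 2) by (apply pow_incr; lra).
  assert (Hn2 : d x (u n) ^ 2 <= (dl + delta) ^ 2) by (apply pow_incr; lra).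
  assert (d (u m) (u n) ^ 2 < eps ^ 2) by nra.
  pose proof (dist_ge0 (u m) (u n)). nra.
Qed.

Hypothesis Hcomplete : complete X d.

Lemma nearest_exists (C : X -> Prop) x : nonempty X C -> closed X d C -> convex X d C ->
  exists p, is_nearest C x p.
Proof.
  intros HneC HclC HC.
  destruct (dist_inf_approx C x HneC) as [dl [Hdl [Hlow Happrox]]].
  assert (Hu : exists u : nat -> X, forall n, C (u n) /\ d x (u n) < dl + / (INR n + 1)).
  { apply (choice (fun n c => C c /\ d x c < dl + / (INR n + 1))).
    intro n. apply Happrox. apply Rinv_0_lt_compat.
    pose proof (pos_INR n). lra. }
  destruct Hu as [u Hu].
  destruct (Hcomplete u (minimizing_sequence_cauchy C x dl u HC Hdl Hlow Hu)) as [l Hl].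
  exists l. split; [exact (HclC u l (fun n => proj1 (Hu n)) Hl)|].
  intros c Cc. apply (Rle_trans _ dl); [|exact (Hlow c Cc)].
  apply Rle_plus_epsilon. intros eps Heps.
  destruct (Hl (eps / 2) ltac:(lra)) as [N1 HN1].
  destruct (inv_INR_succ_eventually_lt (eps / 2) ltac:(lra)) as [N2 HN2].
  pose proof (HN1 (N1 + N2)%nat ltac:(lia)). pose proof (HN2 (N1 + N2)%nat ltac:(lia)).
  pose proof (proj2 (Hu (N1 + N2)%nat)).
  pose proof (dist_triangle x (u (N1 + N2)%nat) l). lra.
Qed.

Lemma proj_is_nearest (C : X -> Prop) x : nonempty X C -> closed X d C -> convex X d C ->
  is_nearest C x (proj X d C x).
Proof.
  intros HneC HclC HC. unfold proj. apply epsilon_spec. now apply nearest_exists.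
Qed.

Section CyclicProjection.

Variables A B : X -> Prop.
Hypotheses (HneA : nonempty X A) (HclA : closed X d A) (HA : convex X d A).
Hypotheses (HneB : nonempty X B) (HclB : closed X d B) (HB : convex X d B).

Lemma cycP_nearest_of_A x : A x -> is_nearest B x (cycP X d A B x).
Proof.
  intros Ax. unfold cycP. destruct (excluded_middle_informative (A x)); [|contradiction].
  now apply proj_is_nearest.
Qed.

Lemma cycP_nearest_of_B y : B y -> is_nearest A y (cycP X d A B y).
Proof.
  intros By. unfold cycP. destruct (excluded_middle_informative (A y)) as [Ay|].
  - rewrite (is_nearest_self B y _ By (proj_is_nearest B y HneB HclB HB)).
    now apply is_nearest_refl.
  - now apply proj_is_nearest.
Qed.

End CyclicProjection.

End CAT0Geometry.

Theorem mainTheorem9 (X : Type) (d : X -> X -> R) (A B : X -> Prop) :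
  complete_CAT0 X d ->
  nonempty X A -> closed X d A -> convex X d A ->
  nonempty X B -> closed X d B -> convex X d B ->
  cyclic_map X A B (cycP X d A B) /\ rel_nonexpansive X d A B (cycP X d A B).
Proof.
  intros [Hmetric [Hgeodesic [Hcat Hcomplete]]] HneA HclA HA HneB HclB HB.
  pose proof (cycP_nearest_of_A X d Hmetric Hgeodesic Hcat Hcomplete A B HneB HclB HB)
    as HnearA.
  pose proof (cycP_nearest_of_B X d Hmetric Hgeodesic Hcat Hcomplete A B HneA HclA HA
                HneB HclB HB) as HnearB.
  split; [split|].
  - intros x Ax. exact (proj1 (HnearA x Ax)).
  - intros y By. exact (proj1 (HnearB y By)).
  - intros x y Ax By.
    exact (nearest_points_nonexpansive X d Hmetric Hgeodesic Hcat A B x y _ _ HA HB Ax By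
             (HnearA x Ax) (HnearB y By)).
Qed.
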